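(* In the setting below, let $N=\lim_{t\to\infty}(S+tP)^{-1}$. If $r=0$ then $\|N\|_\infty=0$. If $r\ge1$, let $d=\sum_{i=1}^r|p_i-q_i|$; then $$\|N\|_\infty=\frac1\alpha+\frac{\ell}{\alpha(\alpha+\ell\gamma)}\max_{1\le i\le r}\frac{|p_i-q_i|\,(d-2|p_i-q_i|)}{p_i+q_i}.$$
   Context: Let $n\ge3$, $\ell>0$, $\alpha\ge(n-2)\ell$, $S=\alpha I_n+\ell\mathbf{1}_n\mathbf{1}_n^\top$. For a real matrix $P$, $\Delta_i(P)=|P_{ii}|-\sum_{j\ne i}|P_{ij}|$. A signless Laplacian is a real symmetric $n\times n$ matrix $P$ with $P_{ij}\in\{0,1\}$ for $i\ne j$, $P_{ii}\ge0$, and $\Delta_i(P)\in\{0,2\}$ for all $i$; its graph $G$ has vertex set $\{1,\dots,n\}$, an edge $\{i,j\}$ ($i\ne j$) whenever $P_{ij}=1$, and a self-loop $\{i,i\}$ whenever $\Delta_i(P)=2$ (graphs with self-loops are not bipartite). $r$ is the number of bipartite connected components $G_1,\dots,G_r$ of $G$, where $G_i$ has bipartition classes of sizes $p_i,q_i$; $\gamma=\sum_{i=1}^r\frac{(p_i-q_i)^2}{p_i+q_i}$. $\|A\|_\infty$ is the maximum absolute row sum. *)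

From HB Require Import structures.
From mathcomp Require Import all_boot all_order all_algebra.
Set Implicit Arguments. Unset Strict Implicit. Unset Printing Implicit Defensive.
Import Order.TTheory GRing.Theory Num.Theory.
Local Open Scope ring_scope.

Section Defs.
Variable R : realFieldType.
Variable n : nat.
Implicit Types (P A : 'M[R]_n) (C : {set 'I_n}).

Definition Smat (alpha l : R) : 'M[R]_n :=
  \matrix_(i, j) (alpha * (i == j)%:R + l).

Definition Delta P (i : 'I_n) : R :=
  `|P i i| - \sum_(j < n | j != i) `|P i j|.

Definition signless_laplacian P : Prop :=
  P^T = P /\
  (forall i j : 'I_n, i != j -> P i j = 0 \/ P i j = 1) /\
  (forall i : 'I_n, 0 <= P i i) /\
  (forall i : 'I_n, Delta P i = 0 \/ Delta P i = 2).

Definition adj P : rel 'I_n := fun i j => (i != j) && (P i j == 1).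
Definition has_loop P (i : 'I_n) : bool := Delta P i == 2.

Definition comp P (i : 'I_n) : {set 'I_n} := [set j | connect (adj P) i j].

Definition proper2 P C (c : {ffun 'I_n -> bool}) : bool :=
  [forall i in C, forall j in C, adj P i j ==> (c i != c j)].

Definition bipartiteb P C : bool :=
  [forall i in C, ~~ has_loop P i] && [exists c, proper2 P C c].

Definition bip_comps P : {set {set 'I_n}} :=
  [set C | [exists i, C == comp P i] & bipartiteb P C].

Definition rcount P : nat := #|bip_comps P|.

(* sizes of the two bipartition classes of C (w.r.t. a chosen colouring) *)
Definition pcl P C : nat :=
  if [pick c | proper2 P C c] is Some c then #|[set j in C | c j]| else 0.
Definition qcl P C : nat := #|C| - pcl P C.

Definition absdiff P C : R := `|(pcl P C)%:R - (qcl P C)%:R|.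

Definition gammaP P : R :=
  \sum_(C in bip_comps P) ((pcl P C)%:R - (qcl P C)%:R) ^+ 2 / (#|C|)%:R.

Definition dP P : R := \sum_(C in bip_comps P) absdiff P C.

Definition maxterm P C : R :=
  absdiff P C * (dP P - 2 * absdiff P C) / ((pcl P C + qcl P C)%N)%:R.

Definition norm_inf A : R := \big[Num.max/0]_(i < n) \sum_(j < n) `|A i j|.

Definition mx_lim_infty (F : R -> 'M[R]_n) (L : 'M[R]_n) : Prop :=
  forall eps : R, 0 < eps -> exists T : R, forall t : R, T < t ->
    forall i j : 'I_n, `|F t i j - L i j| < eps.

End Defs.

From Pilot Require Import Defs.
From HB Require Import structures.
From mathcomp Require Import all_boot all_order all_algebra.
From mathcomp Require Import ring lra.
Import Order.TTheory GRing.Theory Num.Theory.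
Local Open Scope ring_scope.
Set Implicit Arguments. Unset Strict Implicit. Unset Printing Implicit Defensive.

(* For a row vector x, 2 x P x^T = 2 sum_i Delta_i x_i^2 + sum_{i <> j} P_ij (x_i + x_j)^2,
   so P is positive semidefinite and x P = 0 forces x to vanish at self-loops and to change
   sign along every edge.  Hence x P = 0 iff x vanishes outside the bipartite components and
   is, on each bipartite component C, a multiple of the signed indicator z_C (+1 on one
   colour class, -1 on the other).  The z_C are pairwise orthogonal, |z_C|^2 = |C|, and the
   entries of z_C sum to w_C = p_C - q_C.

   The limit is N = alpha^-1 sum_C z_C^T z_C / |C| - c v^T v, where v = sum_C w_C/|C| z_C
   and c = l / (alpha (alpha + l gamma)).  One checks N P = 0 and z_C S N = z_C, so that
   x S N = x on ker P; as P is symmetric, the rows of I - N S lie in the row space of P,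
   i.e. I - N S = Y P.  This yields (S + tP)^-1 - N = t^-1 (Y - Y S (S + tP)^-1), and since
   S + tP >= alpha I the inverse stays bounded, whence (S + tP)^-1 -> N.  Finally the
   absolute row sums of N are computed: 0 on rows outside the bipartite components and
   alpha^-1 + c |w_C| (d - 2 |w_C|) / |C| on the rows of a bipartite component C. *)

Section Components.
Variables (R : realFieldType) (n : nat) (P : 'M[R]_n).
Hypothesis HP : signless_laplacian P.

Lemma P_sym i j : P j i = P i j.
Proof. by case: HP => HT _; rewrite -{1}HT mxE. Qed.

Lemma P_offdiag i j : i != j -> P i j = 0 \/ P i j = 1.
Proof. by case: HP => _ [H _]; apply: H. Qed.

Lemma P_offdiag_ge0 i j : i != j -> 0 <= P i j.
Proof. by move/P_offdiag => [] ->. Qed.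

Lemma adj_sym : symmetric (adj P).
Proof. by move=> i j; rewrite /adj eq_sym P_sym. Qed.

Lemma comp_self i : i \in Defs.comp P i.
Proof. by rewrite inE connect0. Qed.

Lemma comp_adj i a b : a \in Defs.comp P i -> adj P a b -> b \in Defs.comp P i.
Proof. by rewrite !inE => Hia Hab; apply: connect_trans Hia (connect1 Hab). Qed.

Lemma comp_of_mem i j : j \in Defs.comp P i -> Defs.comp P j = Defs.comp P i.
Proof.
rewrite inE => Hij; apply/setP => k; rewrite !inE.
apply/idP/idP => [|Hik]; first exact: connect_trans.
by apply: connect_trans Hik; rewrite (sym_connect_sym adj_sym).
Qed.

Lemma bip_comp_of_mem C u : C \in bip_comps P -> u \in C -> C = Defs.comp P u.
Proof.
by rewrite inE => /andP [/existsP [i /eqP ->] _] Hu; rewrite (comp_of_mem Hu).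
Qed.

Lemma bip_comps_disjoint C D u :
  C \in bip_comps P -> D \in bip_comps P -> u \in C -> u \in D -> C = D.
Proof.
by move=> HC HD HuC HuD; rewrite (bip_comp_of_mem HC HuC) (bip_comp_of_mem HD HuD).
Qed.

Lemma bip_comp_adj C a b : C \in bip_comps P -> a \in C -> adj P a b -> b \in C.
Proof. by move=> HC Ha; rewrite (bip_comp_of_mem HC Ha); apply: comp_adj (comp_self a). Qed.

Lemma bip_comp_nonempty C : C \in bip_comps P -> exists u, u \in C.
Proof. by rewrite inE => /andP [/existsP [i /eqP ->] _]; exists i; apply: comp_self. Qed.

Lemma bip_comp_card_gt0 C : C \in bip_comps P -> 0 < (#|C|%:R : R).
Proof. by case/bip_comp_nonempty=> u Hu; rewrite ltr0n; apply/card_gt0P; exists u. Qed.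

Lemma connect_invariant (A : {set 'I_n}) (f : 'I_n -> R) :
  (forall a b, a \in A -> adj P a b -> b \in A /\ f b = f a) ->
  forall u v, u \in A -> connect (adj P) u v -> f v = f u.
Proof.
move=> Hf u v Hu /connectP [p]; elim: p u Hu => [|x p IH] u Hu /=; first by move=> _ ->.
case/andP => Hux Hp Hv; have [HxA Hfx] := Hf _ _ Hu Hux.
by rewrite (IH x HxA Hp Hv) Hfx.
Qed.

End Components.

Section QuadraticForm.
Variables (R : realFieldType) (n : nat).

Definition qform (A : 'M[R]_n) (x : 'I_n -> R) : R := \sum_i \sum_j x i * A i j * x j.

Lemma qformE (A : 'M[R]_n) (x : 'rV[R]_n) :
  (x *m A *m x^T) 0 0 = qform A (fun i => x 0 i).
Proof.
rewrite mxE /qform exchange_big /=; apply: eq_bigr => j _.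
by rewrite !mxE mulr_suml; apply: eq_bigr => i _; rewrite ?mxE.
Qed.

Lemma qformDZ (A B : 'M[R]_n) t x : qform (A + t *: B) x = qform A x + t * qform B x.
Proof.
rewrite /qform mulr_sumr -big_split /=; apply: eq_bigr => i _.
by rewrite mulr_sumr -big_split /=; apply: eq_bigr => j _; rewrite !mxE; ring.
Qed.

Lemma qform_Smat alpha l x :
  qform (Smat n alpha l) x = alpha * \sum_i x i ^+ 2 + l * (\sum_i x i) ^+ 2.
Proof.
rewrite /qform expr2 mulr_suml !mulr_sumr -big_split /=; apply: eq_bigr => i _.
have Sij j : x i * Smat n alpha l i j * x j =
    alpha * ((i == j)%:R * (x i * x j)) + l * (x i * x j) by rewrite mxE; ring.
under eq_bigr do rewrite Sij.
rewrite big_split /= -!mulr_sumr; congr (_ + _).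
rewrite (bigD1 i) //= eqxx mul1r big1 ?addr0 ?expr2 // => j ji.
by rewrite eq_sym (negbTE ji) mul0r.
Qed.

End QuadraticForm.

Section Kernel.
Variables (R : realFieldType) (n : nat) (P : 'M[R]_n).
Hypothesis HP : signless_laplacian P.

(* The edge part of 2 x P x^T: each edge {i, j} is counted once from each end. *)
Definition edge_energy (x : 'I_n -> R) : R :=
  \sum_i \sum_(j | j != i) P i j * (x i + x j) ^+ 2.

Lemma Delta_ge0 i : 0 <= Delta P i.
Proof. by case: HP => _ [_ [_ H]]; case: (H i) => ->. Qed.

Lemma Delta_noloop i : ~~ has_loop P i -> Delta P i = 0.
Proof. by case: HP => _ [_ [_ H]]; rewrite /has_loop; case: (H i) => ->; rewrite ?eqxx. Qed.

Lemma P_diag i : P i i = Delta P i + \sum_(j | j != i) P i j.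
Proof.
rewrite /Delta ger0_norm; last by case: HP => _ [_ [H _]].
under eq_bigr => j ji do rewrite ger0_norm ?(P_offdiag_ge0 HP) 1?eq_sym //.
by rewrite subrK.
Qed.

Lemma qform_decomp x :
  2 * qform P x = 2 * \sum_i Delta P i * x i ^+ 2 + edge_energy x.
Proof.
set off := \sum_i \sum_(j | j != i) x i * P i j * x j.
set deg := \sum_i \sum_(j | j != i) P i j * x i ^+ 2.
have offE : \sum_i \sum_(j | j != i) P i j * x j ^+ 2 = deg.
  have mk (F : 'I_n -> 'I_n -> R) :
      \sum_i \sum_(j | j != i) F i j = \sum_i \sum_j (j != i)%:R * F i j.
    apply: eq_bigr => i _; rewrite big_mkcond /=; apply: eq_bigr => j _.
    by case: (j != i); rewrite ?mul1r ?mul0r.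
  rewrite /deg !mk exchange_big /=; apply: eq_bigr => i _; apply: eq_bigr => j _.
  by rewrite eq_sym (P_sym HP).
have energyE : edge_energy x =
    deg + \sum_i \sum_(j | j != i) P i j * x j ^+ 2 + 2 * off.
  rewrite /edge_energy /deg /off mulr_sumr -!big_split /=; apply: eq_bigr => i _.
  by rewrite mulr_sumr -!big_split /=; apply: eq_bigr => j _; rewrite sqrrD; ring.
have qformE : qform P x = \sum_i Delta P i * x i ^+ 2 + deg + off.
  rewrite /qform /deg /off -!big_split /=; apply: eq_bigr => i _.
  by rewrite (bigD1 i) //= P_diag -mulr_suml; ring.
by rewrite energyE offE qformE; ring.
Qed.

Lemma edge_energy_ge0 x : 0 <= edge_energy x.
Proof.
apply: sumr_ge0 => i _; apply: sumr_ge0 => j ji.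
by rewrite mulr_ge0 ?sqr_ge0 // (P_offdiag_ge0 HP) // eq_sym.
Qed.

Lemma loop_energy_ge0 x : 0 <= \sum_i Delta P i * x i ^+ 2.
Proof. by apply: sumr_ge0 => i _; rewrite mulr_ge0 ?Delta_ge0 ?sqr_ge0. Qed.

Lemma qform_ge0 x : 0 <= qform P x.
Proof.
have := qform_decomp x; have := edge_energy_ge0 x; have := loop_energy_ge0 x; lra.
Qed.

Lemma qform_eq0 x : qform P x = 0 ->
  \sum_i Delta P i * x i ^+ 2 = 0 /\ edge_energy x = 0.
Proof.
move=> q0; have := qform_decomp x; rewrite q0.
have := edge_energy_ge0 x; have := loop_energy_ge0 x; split; lra.
Qed.

Lemma qform0_edge x : qform P x = 0 -> forall i j, adj P i j -> x j = - x i.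
Proof.
move=> /qform_eq0 [_ E0] i j /andP [ij /eqP Pij].
have row_ge0 k : true -> 0 <= \sum_(m | m != k) P k m * (x k + x m) ^+ 2.
  by move=> _; apply: sumr_ge0 => m mk; rewrite mulr_ge0 ?sqr_ge0 // (P_offdiag_ge0 HP) // eq_sym.
have /psumr_eq0P := psumr_eq0P row_ge0 E0 (i := i) isT.
have term_ge0 m : m != i -> 0 <= P i m * (x i + x m) ^+ 2.
  by move=> mi; rewrite mulr_ge0 ?sqr_ge0 // (P_offdiag_ge0 HP) // eq_sym.
move=> /(_ term_ge0 j); rewrite eq_sym ij Pij mul1r => /(_ isT) /eqP.
by rewrite sqrf_eq0 addr_eq0 => /eqP ->; rewrite opprK.
Qed.

Lemma qform0_loop x : qform P x = 0 -> forall i, has_loop P i -> x i = 0.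
Proof.
move=> /qform_eq0 [L0 _] i /eqP Hl.
have term_ge0 k : true -> 0 <= Delta P k * x k ^+ 2 by rewrite mulr_ge0 ?Delta_ge0 ?sqr_ge0.
have := psumr_eq0P term_ge0 L0 (i := i) isT; rewrite Hl.
by move/eqP; rewrite mulf_eq0 sqrf_eq0 pnatr_eq0 /= => /eqP.
Qed.

Lemma ker_qform0 (x : 'rV[R]_n) : x *m P = 0 -> qform P (fun i => x 0 i) = 0.
Proof. by move=> Hx; rewrite -qformE Hx mul0mx mxE. Qed.

End Kernel.

Section SignedIndicator.
Variables (R : realFieldType) (n : nat) (P : 'M[R]_n).
Hypothesis HP : signless_laplacian P.
Implicit Types (C D : {set 'I_n}) (x : 'rV[R]_n).

Definition side_sign C (u : 'I_n) : R :=
  if [pick c | proper2 P C c] is Some c then (if c u then 1 else -1) else 0.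

Definition signed_ind C : 'rV[R]_n := \row_u (if u \in C then side_sign C u else 0).

Definition pq_diff C : R := (pcl P C)%:R - (qcl P C)%:R.

Lemma bip_compsP C : C \in bip_comps P ->
  (forall i, i \in C -> ~~ has_loop P i) /\
  exists c, [/\ proper2 P C c, (forall u, side_sign C u = if c u then 1 else -1) &
             pcl P C = #|[set j in C | c j]| ].
Proof.
rewrite inE => /andP [_ /andP [/forallP noloop /existsP [c0 Hc0]]]; split.
  by move=> i Hi; have := noloop i; rewrite Hi.
rewrite /side_sign /pcl; case: pickP => [c Hc|]; last by move/(_ c0); rewrite Hc0.
by exists c.
Qed.

Lemma pcl_le_card C : C \in bip_comps P -> (pcl P C <= #|C|)%N.
Proof.
case/bip_compsP=> _ [c [_ _ ->]].
by apply: subset_leq_card; apply/subsetP => x; rewrite inE => /andP [].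
Qed.

Lemma pq_card C : C \in bip_comps P -> (pcl P C + qcl P C)%N = #|C|.
Proof. by move=> HC; rewrite /qcl subnKC // pcl_le_card. Qed.

Lemma side_sign_sq C u : C \in bip_comps P -> side_sign C u * side_sign C u = 1.
Proof. by case/bip_compsP=> _ [c [_ -> _]]; case: (c u); rewrite ?mulrNN mulr1. Qed.

Lemma side_sign_adj C a b : C \in bip_comps P ->
  a \in C -> b \in C -> adj P a b -> side_sign C b = - side_sign C a.
Proof.
case/bip_compsP=> _ [c [/forallP Hc Hs _]] Ha Hb Hab; rewrite !Hs.
move: (Hc a); rewrite Ha /= => /forallP /(_ b); rewrite Hb Hab /=.
by case: (c a); case: (c b) => //= _; rewrite ?opprK.
Qed.

Lemma signed_ind_out C u : u \notin C -> signed_ind C 0 u = 0.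
Proof. by move=> Hu; rewrite mxE (negbTE Hu). Qed.

Lemma norm_signed_ind C u : C \in bip_comps P -> u \in C -> `|signed_ind C 0 u| = 1.
Proof.
move=> HC Hu; rewrite mxE Hu; case/bip_compsP: HC => _ [c [_ -> _]].
by case: (c u); rewrite ?normrN normr1.
Qed.

(* z_C P = 0: at a vertex v of C the diagonal entry P_vv = deg v cancels the
   deg v neighbours of opposite sign; outside C no neighbour lies in C. *)
Lemma signed_ind_ker C : C \in bip_comps P -> signed_ind C *m P = 0.
Proof.
move=> HC; apply/rowP => v; rewrite !mxE.
have [noloop _] := bip_compsP HC.
have [Hv|Hv] := boolP (v \in C); last first.
  rewrite big1 // => u _; rewrite !mxE.
  have [Hu|_] := boolP (u \in C); last by rewrite mul0r.
  have uv : u != v by apply: contraNneq Hv => <-.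
  have [->|P1] := P_offdiag HP uv; first by rewrite mulr0.
  have Hadj : adj P u v by rewrite /adj uv P1 eqxx.
  by rewrite (bip_comp_adj HP HC Hu Hadj) in Hv.
rewrite (bigD1 v) //= !mxE Hv.
have nbrs : \sum_(u | u != v) signed_ind C 0 u * P u v =
            \sum_(u | u != v) - side_sign C v * P v u.
  apply: eq_bigr => u uv; rewrite !mxE (P_sym HP).
  have vu : v != u by rewrite eq_sym.
  have [->|P1] := P_offdiag HP vu; first by rewrite !mulr0.
  have Hadj : adj P v u by rewrite /adj eq_sym uv P1 eqxx.
  have Hu := bip_comp_adj HP HC Hv Hadj.
  by rewrite Hu (side_sign_adj HC Hv Hu Hadj) P1.
rewrite nbrs -mulr_sumr (P_diag HP v) (Delta_noloop HP (noloop v Hv)) add0r.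
by rewrite mulNr addrN.
Qed.

Lemma sum_signed_ind C : C \in bip_comps P -> \sum_u signed_ind C 0 u = pq_diff C.
Proof.
move=> HC; have Hle := pcl_le_card HC.
case/bip_compsP: HC => _ [c [_ Hs Hp]].
rewrite /pq_diff /qcl natrB // Hp.
have -> : \sum_u signed_ind C 0 u = \sum_(u in C) (2 * (c u)%:R - 1).
  rewrite [RHS]big_mkcond /=; apply: eq_bigr => u _; rewrite !mxE Hs.
  by case: (u \in C); case: (c u) => //=; rewrite ?mulr1 ?mulr0; ring.
rewrite sumrB sumr_const -mulr_sumr.
have -> : \sum_(u in C) ((c u)%:R : R) = \sum_(u in [set j in C | c j]) 1.
  rewrite big_mkcond [RHS]big_mkcond /=; apply: eq_bigr => u _; rewrite inE.
  by case: (u \in C); case: (c u).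
by rewrite sumr_const; ring.
Qed.

Lemma dot_signed_ind C D : C \in bip_comps P -> D \in bip_comps P ->
  \sum_u signed_ind C 0 u * signed_ind D 0 u = if C == D then (#|C|)%:R else 0.
Proof.
move=> HC HD; case: eqP => [<-|CD].
  rewrite -sumr_const [RHS]big_mkcond /=; apply: eq_bigr => u _; rewrite !mxE.
  by case: (u \in C); rewrite ?mulr0 // side_sign_sq.
apply: big1 => u _; rewrite !mxE.
have [HuC|] := boolP (u \in C); last by rewrite mul0r.
have [HuD|] := boolP (u \in D); last by rewrite mulr0.
by case: (CD (bip_comps_disjoint HP HC HD HuC HuD)).
Qed.

Lemma ker_sign_const x C u v : x *m P = 0 -> C \in bip_comps P -> u \in C -> v \in C ->
  x 0 v * side_sign C v = x 0 u * side_sign C u.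
Proof.
move=> Hx HC Hu Hv; have Hq := ker_qform0 Hx.
have Huv : connect (adj P) u v by move: Hv; rewrite (bip_comp_of_mem HP HC Hu) inE.
apply: (connect_invariant (A := C) (f := fun w => x 0 w * side_sign C w)) Hu Huv.
move=> a b Ha Hab; have Hb := bip_comp_adj HP HC Ha Hab; split => //.
by rewrite (qform0_edge HP Hq Hab) (side_sign_adj HC Ha Hb Hab) mulrNN.
Qed.

(* A kernel vector is supported on the bipartite components: on the component of a
   vertex where it does not vanish, |x| is constant, nonzero, so there is no loop and
   the sign of x is a proper 2-colouring. *)
Lemma ker_support_bip x u : x *m P = 0 -> x 0 u != 0 -> Defs.comp P u \in bip_comps P.
Proof.
move=> Hx Hu; have Hq := ker_qform0 Hx.
have sq_const w : w \in Defs.comp P u -> x 0 w ^+ 2 = x 0 u ^+ 2.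
  rewrite inE; apply: (connect_invariant (A := Defs.comp P u) (f := fun w => x 0 w ^+ 2));
    last exact: comp_self.
  move=> a b Ha Hab; split; first exact: comp_adj Ha Hab.
  by rewrite (qform0_edge HP Hq Hab) sqrrN.
have nz w : w \in Defs.comp P u -> x 0 w != 0.
  move=> /sq_const E; apply: contraNneq Hu => x0.
  by move: E; rewrite x0 expr0n /= => /esym/eqP; rewrite sqrf_eq0.
rewrite inE; apply/andP; split; first by apply/existsP; exists u.
apply/andP; split.
  apply/forallP => i; apply/implyP => Hi; apply/negP => Hl.
  by have := nz i Hi; rewrite (qform0_loop HP Hq Hl) eqxx.
apply/existsP; exists [ffun w => 0 < x 0 w * x 0 u].
apply/forallP => a; apply/implyP => Ha; apply/forallP => b; apply/implyP => Hb.
apply/implyP => Hab; rewrite !ffunE (qform0_edge HP Hq Hab) mulNr oppr_gt0.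
have : x 0 a * x 0 u != 0 by rewrite mulf_neq0 ?nz // comp_self.
by case: ltgtP.
Qed.

Lemma kernel_decomp x : x *m P = 0 ->
  x = \sum_(C in bip_comps P)
        ((\sum_v x 0 v * signed_ind C 0 v) / (#|C|)%:R) *: signed_ind C.
Proof.
move=> Hx; apply/rowP => u; rewrite summxE.
have [HB|HB] := boolP (Defs.comp P u \in bip_comps P); last first.
  have -> : x 0 u = 0 by apply: contraNeq HB; apply: ker_support_bip.
  apply/esym/big1 => D HD; rewrite !mxE.
  have [HuD|] := boolP (u \in D); last by rewrite mulr0.
  by move: HB; rewrite -(bip_comp_of_mem HP HD HuD) HD.
set C := Defs.comp P u; have Hu : u \in C by apply: comp_self.
rewrite (bigD1 C) //= [X in _ = _ + X]big1 ?addr0; last first.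
  move=> D /andP [HD DC]; rewrite !mxE.
  have [HuD|] := boolP (u \in D); last by rewrite mulr0.
  by move: DC; rewrite (bip_comp_of_mem HP HD HuD) eqxx.
rewrite !mxE Hu.
have -> : \sum_v x 0 v * signed_ind C 0 v = \sum_(v in C) x 0 u * side_sign C u.
  rewrite [RHS]big_mkcond /=; apply: eq_bigr => v _; rewrite !mxE.
  have [Hv|] := boolP (v \in C); last by rewrite mulr0.
  exact: ker_sign_const Hx HB Hu Hv.
rewrite sumr_const -[x 0 u * side_sign C u *+ _]mulr_natr.
have C0 : (#|C|%:R : R) != 0 by rewrite lt0r_neq0 // (bip_comp_card_gt0 HB).
by rewrite mulfK // -mulrA side_sign_sq // mulr1.
Qed.

End SignedIndicator.

(* For a symmetric P, a matrix G whose rows are orthogonal to ker P has its rows in the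
   row space of P, i.e. G = Y P for some Y: the annihilator W of ker P contains both G and
   the row space of P, and has the rank of P. *)
Lemma sub_rowspace_sym (F : fieldType) n m (P : 'M[F]_n) (G : 'M[F]_(m, n)) :
  P^T = P -> (forall x : 'rV[F]_n, x *m P = 0 -> G *m x^T = 0) -> (G <= P)%MS.
Proof.
move=> Psym HG; set K := kermx P; set W := kermx K^T.
have KP : K *m P = 0 by apply/sub_kermxP.
have GW : (G <= W)%MS.
  apply/sub_kermxP; apply/matrixP => i j.
  have rowP0 : row j K *m P = 0 by rewrite -row_mul KP row0.
  have rowE : (G *m K^T) i j = (G *m (row j K)^T) i 0.
    by rewrite !mxE; apply: eq_bigr => k _; rewrite !mxE.
  by rewrite rowE HG // !mxE.
have PW : (P <= W)%MS by apply/sub_kermxP; rewrite -{1}Psym -trmx_mul KP trmx0.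
have rankW : \rank W = \rank P.
  by rewrite /W mxrank_ker mxrank_tr /K mxrank_ker subKn // rank_leq_row.
by apply: submx_trans GW _; rewrite -(mxrank_leqif_sup PW).2 rankW eqxx.
Qed.

Section LimitMatrix.
Variables (R : realFieldType) (n : nat) (P : 'M[R]_n) (alpha l : R).
Hypotheses (HP : signless_laplacian P) (alpha_gt0 : 0 < alpha) (l_gt0 : 0 < l).

Definition lim_coef : R := l / (alpha * (alpha + l * gammaP P)).

Definition balance (i : 'I_n) : R :=
  \sum_(C in bip_comps P) pq_diff P C / #|C|%:R * signed_ind P C 0 i.

Definition limit_mx : 'M[R]_n := \matrix_(i, j)
  (alpha^-1 * (\sum_(C in bip_comps P) signed_ind P C 0 i * signed_ind P C 0 j / #|C|%:R)
   - lim_coef * balance i * balance j).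

Lemma gammaP_ge0 : 0 <= gammaP P.
Proof. by apply: sumr_ge0 => C _; rewrite divr_ge0 ?sqr_ge0 ?ler0n. Qed.

Lemma alpha_l_gamma_gt0 : 0 < alpha + l * gammaP P.
Proof. by rewrite ltr_pwDl // mulr_ge0 ?gammaP_ge0 // ltW. Qed.

Lemma lim_coef_ge0 : 0 <= lim_coef.
Proof. by rewrite divr_ge0 ?mulr_ge0 ?ltW ?alpha_l_gamma_gt0. Qed.

Lemma Smat_sym : (Smat n alpha l)^T = Smat n alpha l.
Proof. by apply/matrixP => i j; rewrite !mxE eq_sym. Qed.

Lemma limit_mx_sym : limit_mx^T = limit_mx.
Proof.
apply/matrixP => i j; rewrite !mxE; congr (_ * _ - _); last by ring.
by apply: eq_bigr => C _; ring.
Qed.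

Lemma mulmx_limit_mx (y : 'rV[R]_n) j : (y *m limit_mx) 0 j =
  alpha^-1 * (\sum_(C in bip_comps P)
                (\sum_i y 0 i * signed_ind P C 0 i) * signed_ind P C 0 j / #|C|%:R)
  - lim_coef * (\sum_i y 0 i * balance i) * balance j.
Proof.
rewrite mxE; under eq_bigr do rewrite mxE mulrBr.
rewrite sumrB; congr (_ - _); last first.
  by rewrite mulr_sumr mulr_suml; apply: eq_bigr => i _; ring.
rewrite mulr_sumr; under eq_bigr do rewrite !mulr_sumr.
rewrite exchange_big /=; apply: eq_bigr => C _.
by rewrite !mulr_suml mulr_sumr; apply: eq_bigr => i _; ring.
Qed.

(* N P = 0, since N is built from kernel vectors of the symmetric P. *)
Lemma limit_mx_ker : limit_mx *m P = 0.
Proof.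
have zP C : C \in bip_comps P -> forall j, \sum_k signed_ind P C 0 k * P k j = 0.
  by move=> HC j; have /rowP/(_ j) := signed_ind_ker HP HC; rewrite !mxE.
have vP j : \sum_k balance k * P k j = 0.
  under eq_bigr do rewrite mulr_suml.
  rewrite exchange_big /=; apply: big1 => C HC.
  by under eq_bigr do rewrite -mulrA; rewrite -mulr_sumr zP // mulr0.
apply/matrixP => i j; rewrite !mxE; under eq_bigr do rewrite mxE mulrBl.
rewrite sumrB (_ : \sum_k _ * balance k * P k j = 0) ?subr0; last first.
  by under eq_bigr do rewrite -mulrA; rewrite -mulr_sumr vP mulr0.
transitivity (alpha^-1 * \sum_(C in bip_comps P) signed_ind P C 0 i / #|C|%:R *
                          \sum_k signed_ind P C 0 k * P k j); last first.
  by rewrite big1 ?mulr0 // => C HC; rewrite zP // mulr0.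
under eq_bigr do rewrite mulr_sumr mulr_suml.
rewrite exchange_big mulr_sumr; apply: eq_bigr => C _.
by rewrite !mulr_sumr; apply: eq_bigr => k _; ring.
Qed.

Lemma signed_ind_Smat D i : D \in bip_comps P ->
  (signed_ind P D *m Smat n alpha l) 0 i = alpha * signed_ind P D 0 i + l * pq_diff P D.
Proof.
move=> HD; rewrite -sum_signed_ind // mxE mulr_sumr.
under eq_bigr do rewrite !mxE mulrDr.
rewrite big_split /=; congr (_ + _); last by apply: eq_bigr => k _; rewrite mxE mulrC.
rewrite (bigD1 i) //= eqxx mulr1 big1 ?addr0; first by rewrite mxE mulrC.
by move=> k ki; rewrite (negbTE ki) !mulr0.
Qed.

Lemma signed_ind_S_dot C D : C \in bip_comps P -> D \in bip_comps P ->
  \sum_i (signed_ind P D *m Smat n alpha l) 0 i * signed_ind P C 0 i =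
  alpha * (if C == D then #|D|%:R else 0) + l * pq_diff P D * pq_diff P C.
Proof.
move=> HC HD; under eq_bigr do rewrite signed_ind_Smat // mulrDl.
rewrite big_split /=; congr (_ + _); last by rewrite -mulr_sumr sum_signed_ind.
have := dot_signed_ind HP HC HD; case: eqP => [<-|_] /= dot;
  by rewrite -[X in _ = alpha * X]dot mulr_sumr; apply: eq_bigr => i _; ring.
Qed.

Lemma signed_ind_S_balance D : D \in bip_comps P ->
  \sum_i (signed_ind P D *m Smat n alpha l) 0 i * balance i =
  (alpha + l * gammaP P) * pq_diff P D.
Proof.
move=> HD; rewrite /balance; under eq_bigr do rewrite mulr_sumr.
rewrite exchange_big /= (eq_bigr (fun C => pq_diff P C / #|C|%:R *
   (alpha * (if C == D then #|D|%:R else 0) + l * pq_diff P D * pq_diff P C))); last first.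
  by move=> C HC; rewrite -signed_ind_S_dot // mulr_sumr; apply: eq_bigr => i _; ring.
under eq_bigr do rewrite mulrDr.
rewrite big_split /= (bigD1 D) //= eqxx big1 ?addr0; last first.
  by move=> C /andP [_ /negbTE ->]; rewrite !mulr0.
have D0 : (#|D|%:R : R) != 0 by rewrite lt0r_neq0 // (bip_comp_card_gt0 HD).
rewrite [RHS]mulrDl; congr (_ + _); first by field.
by rewrite /gammaP mulr_sumr mulr_suml; apply: eq_bigr => C _; rewrite /pq_diff; ring.
Qed.

(* z_D S N = z_D, which is where the value of c comes from. *)
Lemma signed_ind_SN D : D \in bip_comps P ->
  signed_ind P D *m Smat n alpha l *m limit_mx = signed_ind P D.
Proof.
move=> HD; apply/rowP => j; rewrite mulmx_limit_mx signed_ind_S_balance //.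
have D0 : (#|D|%:R : R) != 0 by rewrite lt0r_neq0 // (bip_comp_card_gt0 HD).
have along_z : \sum_(C in bip_comps P)
    (\sum_i (signed_ind P D *m Smat n alpha l) 0 i * signed_ind P C 0 i)
      * signed_ind P C 0 j / #|C|%:R = alpha * signed_ind P D 0 j + l * pq_diff P D * balance j.
  rewrite (eq_bigr (fun C => (alpha * (if C == D then #|D|%:R else 0) +
      l * pq_diff P D * pq_diff P C) * signed_ind P C 0 j / #|C|%:R)); last first.
    by move=> C HC; rewrite signed_ind_S_dot.
  under eq_bigr do rewrite !mulrDl.
  rewrite big_split /= (bigD1 D) //= eqxx big1 ?addr0; last first.
    by move=> C /andP [_ /negbTE ->]; rewrite mulr0 !mul0r.
  congr (_ + _); first by field.
  by rewrite /balance mulr_sumr; apply: eq_bigr => C _; ring.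
rewrite along_z /lim_coef.
by field; rewrite !lt0r_neq0 ?alpha_l_gamma_gt0.
Qed.

Lemma ker_SN (x : 'rV[R]_n) : x *m P = 0 -> x *m Smat n alpha l *m limit_mx = x.
Proof.
move=> Hx; rewrite {1}(kernel_decomp HP Hx) [RHS](kernel_decomp HP Hx) !mulmx_suml.
by apply: eq_bigr => C HC; rewrite -!scalemxAl signed_ind_SN.
Qed.

(* I - N S = Y P: the rows of I - N S are orthogonal to ker P, because
   (I - N S) x^T = (x - x S N)^T = 0 by symmetry of N and S. *)
Lemma limit_defect : exists Y : 'M[R]_n, 1%:M - limit_mx *m Smat n alpha l = Y *m P.
Proof.
apply/submxP; apply: sub_rowspace_sym; first by case: HP.
move=> x Hx; rewrite mulmxBl mul1mx.
have : (x *m Smat n alpha l *m limit_mx)^T = x^T by rewrite ker_SN.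
by rewrite !trmx_mul limit_mx_sym Smat_sym mulmxA => ->; rewrite subrr.
Qed.

End LimitMatrix.

(* |x| <= 1 + x^2: a square-root-free way to bound an entry by a sum of squares. *)
Lemma norm_le_1_sqr (R : realFieldType) (x : R) : `|x| <= 1 + x ^+ 2.
Proof.
have := real_normK (num_real x); have := normr_ge0 x.
by move: `|x| => b b0 <-; nra.
Qed.

Lemma sumsq_le_of_dot (R : realFieldType) n (x y : 'I_n -> R) a : 0 < a ->
  a * \sum_i x i ^+ 2 <= \sum_i x i * y i -> \sum_i x i ^+ 2 <= \sum_i y i ^+ 2 / a ^+ 2.
Proof.
move=> a0 Hdot.
have amgm : \sum_i x i * y i <= \sum_i (a / 2 * x i ^+ 2 + y i ^+ 2 / (2 * a)).
  apply: ler_sum => i _; rewrite -subr_ge0.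
  have -> : a / 2 * x i ^+ 2 + y i ^+ 2 / (2 * a) - x i * y i =
            (a * x i - y i) ^+ 2 / (2 * a) by field; rewrite lt0r_neq0.
  by rewrite divr_ge0 ?sqr_ge0 // mulr_ge0 // ltW.
rewrite big_split /= -mulr_sumr -mulr_suml in amgm.
rewrite -mulr_suml.
move: Hdot amgm; move: (\sum_i x i ^+ 2) (\sum_i y i ^+ 2) (\sum_i x i * y i) => X Y Z.
have -> : Y / (2 * a) = Y / a ^+ 2 * (a / 2) by field; rewrite lt0r_neq0.
have a2 : 0 < a / 2 by rewrite divr_gt0.
by move=> H1 H2; rewrite -(ler_pM2r a2); nra.
Qed.

Section Resolvent.
Variables (R : realFieldType) (n : nat) (P : 'M[R]_n) (alpha l : R).
Hypotheses (HP : signless_laplacian P) (alpha_gt0 : 0 < alpha) (l_gt0 : 0 < l).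

Let S := Smat n alpha l.

Lemma qform_SP_lb t x : 0 <= t -> alpha * \sum_i x i ^+ 2 <= qform (S + t *: P) x.
Proof.
move=> t0; rewrite qformDZ qform_Smat.
have := mulr_ge0 t0 (qform_ge0 HP x).
have := mulr_ge0 (ltW l_gt0) (sqr_ge0 (\sum_i x i)); lra.
Qed.

Lemma SP_unit t : 0 <= t -> S + t *: P \in unitmx.
Proof.
move=> t0; rewrite -row_free_unit -kermx_eq0; apply/rowV0P => v /sub_kermxP Hv.
have := qform_SP_lb (fun i => v 0 i) t0; rewrite -qformE Hv mul0mx mxE.
rewrite pmulr_rle0 // => sum_le0; apply/rowP => i; rewrite mxE.
have sum0 : \sum_i v 0 i ^+ 2 = 0.
  by apply/eqP; rewrite eq_le sum_le0 sumr_ge0 // => k _; apply: sqr_ge0.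
have := psumr_eq0P (fun k _ => sqr_ge0 (v 0 k)) sum0 (i := i) isT.
by move/eqP; rewrite sqrf_eq0 => /eqP.
Qed.

Lemma resolvent_bound t (y : 'rV[R]_n) j : 0 <= t ->
  `|(y *m invmx (S + t *: P)) 0 j| <= 1 + \sum_k y 0 k ^+ 2 / alpha ^+ 2.
Proof.
move=> t0; set x := y *m invmx (S + t *: P).
have Hxy : x *m (S + t *: P) = y by rewrite mulmxKV ?SP_unit.
have Hdot : alpha * \sum_i x 0 i ^+ 2 <= \sum_i x 0 i * y 0 i.
  apply: le_trans (qform_SP_lb (fun i => x 0 i) t0) _.
  by rewrite -qformE Hxy mxE; under eq_bigr do rewrite mxE mulrC.
apply: le_trans (norm_le_1_sqr _) _; rewrite lerD2l.
apply: le_trans (sumsq_le_of_dot alpha_gt0 Hdot).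
by rewrite (bigD1 j) //= lerDl sumr_ge0 // => i _; apply: sqr_ge0.
Qed.

Lemma resolvent_gap t (Y : 'M[R]_n) : 0 < t ->
  1%:M - limit_mx P alpha l *m S = Y *m P ->
  invmx (S + t *: P) - limit_mx P alpha l =
  t^-1 *: (Y - Y *m S *m invmx (S + t *: P)).
Proof.
move=> t0 HY; set N := limit_mx P alpha l; set M := S + t *: P.
have HU : M \in unitmx by apply: SP_unit; apply: ltW.
have NM : N *m M = N *m S by rewrite mulmxDr -scalemxAr limit_mx_ker // scaler0 addr0.
have PE : P = t^-1 *: (M - S) by rewrite addrC addKr scalerA mulVf ?scale1r ?lt0r_neq0.
have -> : invmx M - N = (1%:M - N *m M) *m invmx M.
  by rewrite mulmxBl mul1mx -mulmxA mulmxV // mulmx1.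
rewrite NM HY {1}PE -scalemxAr -scalemxAl mulmxBr mulmxBl -[Y *m M *m _]mulmxA.
by rewrite mulmxV // mulmx1.
Qed.

Lemma entry_le_sum_norm (A : 'M[R]_n) i j : `|A i j| <= \sum_i \sum_j `|A i j|.
Proof.
rewrite (bigD1 i) //= (bigD1 j) //= -addrA lerDl.
by rewrite addr_ge0 ?sumr_ge0 // => k _; rewrite sumr_ge0.
Qed.

Lemma resolvent_gap_bound : exists2 B : R, 0 <= B & forall t, 0 < t ->
  forall i j, t * `|(invmx (S + t *: P) - limit_mx P alpha l) i j| <= B.
Proof.
have [Y HY] := limit_defect HP alpha_gt0 l_gt0; set YS := Y *m S.
exists (\sum_i \sum_j `|Y i j| + (1 + \sum_i \sum_k YS i k ^+ 2 / alpha ^+ 2)).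
  rewrite addr_ge0 ?sumr_ge0 // => [i _|]; first exact: sumr_ge0.
  by rewrite addr_ge0 // sumr_ge0 // => i _; rewrite sumr_ge0 // => k _; rewrite divr_ge0 ?sqr_ge0.
move=> t t0 i j; set Z := YS *m invmx (S + t *: P).
have gapE : (Y - Z) i j = Y i j - Z i j by rewrite !mxE.
rewrite (resolvent_gap t0 HY) -/YS -/Z mxE gapE normrM ger0_norm ?invr_ge0 ?(ltW t0) //.
rewrite mulrA mulfV ?lt0r_neq0 // mul1r; apply: le_trans (ler_normB _ _) _.
apply: lerD; first exact: entry_le_sum_norm.
have -> : Z i j = (row i YS *m invmx (S + t *: P)) 0 j.
  by rewrite /Z -row_mul [RHS]mxE.
apply: le_trans (resolvent_bound _ _ (ltW t0)) _; rewrite lerD2l.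
have -> : \sum_k row i YS 0 k ^+ 2 / alpha ^+ 2 = \sum_k YS i k ^+ 2 / alpha ^+ 2.
  by apply: eq_bigr => k _; rewrite mxE.
rewrite [X in _ <= X](bigD1 i) //= lerDl sumr_ge0 // => m _.
by rewrite sumr_ge0 // => k _; rewrite divr_ge0 ?sqr_ge0.
Qed.

Lemma resolvent_limit : mx_lim_infty (fun t : R => invmx (S + t *: P)) (limit_mx P alpha l).
Proof.
have [B B0 HB] := resolvent_gap_bound; move=> eps eps0; exists (B / eps) => t Ht i j.
have t0 : 0 < t by apply: le_lt_trans _ Ht; rewrite divr_ge0 // ltW.
have gapE : (invmx (S + t *: P) - limit_mx P alpha l) i j =
    invmx (S + t *: P) i j - limit_mx P alpha l i j by rewrite !mxE.
have := HB t t0 i j; rewrite gapE => Hgap.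
rewrite ltr_pdivrMr // in Ht; rewrite -(ltr_pM2l t0).
exact: le_lt_trans Hgap Ht.
Qed.

End Resolvent.

Section RowSums.
Variables (R : realFieldType) (n : nat) (P : 'M[R]_n) (alpha l : R).
Hypotheses (HP : signless_laplacian P) (alpha_gt0 : 0 < alpha) (l_gt0 : 0 < l).

Let N := limit_mx P alpha l.
Let c := lim_coef P alpha l.

Definition uncovered (u : 'I_n) : Prop := forall D, D \in bip_comps P -> u \notin D.

Lemma sum_bip_comps_at C u (F : {set 'I_n} -> R) : C \in bip_comps P -> u \in C ->
  (forall D, D \in bip_comps P -> u \notin D -> F D = 0) ->
  \sum_(D in bip_comps P) F D = F C.
Proof.
move=> HC Hu HF; rewrite (bigD1 C) //= big1 ?addr0 // => D /andP [HD DC].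
apply: HF => //; apply: contraNN DC => HuD.
by rewrite (bip_comps_disjoint HP HD HC HuD Hu).
Qed.

Lemma balance_in C u : C \in bip_comps P -> u \in C ->
  balance P u = pq_diff P C / #|C|%:R * signed_ind P C 0 u.
Proof.
move=> HC Hu; rewrite /balance (sum_bip_comps_at (F := fun D =>
  pq_diff P D / #|D|%:R * signed_ind P D 0 u) HC Hu) // => D _ HuD.
by rewrite signed_ind_out ?mulr0.
Qed.

Lemma norm_balance_in C u : C \in bip_comps P -> u \in C ->
  `|balance P u| = `|pq_diff P C| / #|C|%:R.
Proof.
move=> HC Hu; rewrite (balance_in HC Hu) !normrM norm_signed_ind // mulr1 normfV.
by rewrite [`|#|C|%:R|]ger0_norm ?ler0n.
Qed.

Lemma balance_out u : uncovered u -> balance P u = 0.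
Proof. by move=> Hu; rewrite /balance big1 // => D HD; rewrite signed_ind_out ?mulr0 ?Hu. Qed.

Lemma limit_mx_out u v : uncovered u -> N u v = 0.
Proof.
move=> Hu; rewrite mxE balance_out // mulr0 mul0r subr0 big1 ?mulr0 // => D HD.
by rewrite signed_ind_out ?mul0r ?Hu.
Qed.

Lemma limit_mx_in C u v : C \in bip_comps P -> u \in C ->
  N u v = signed_ind P C 0 u *
          (alpha^-1 * signed_ind P C 0 v / #|C|%:R - c * (pq_diff P C / #|C|%:R) * balance P v).
Proof.
move=> HC Hu; rewrite mxE (balance_in HC Hu) (sum_bip_comps_at (F := fun D =>
  signed_ind P D 0 u * signed_ind P D 0 v / #|D|%:R) HC Hu); first by rewrite /c; ring.
by move=> D _ HuD; rewrite signed_ind_out ?mul0r.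
Qed.

Lemma sum_norm_balance : \sum_v `|balance P v| = dP P.
Proof.
have rowE v : `|balance P v| =
    \sum_(D in bip_comps P) (if v \in D then `|pq_diff P D| / #|D|%:R else 0).
  have [C /andP [HC Hv] | Hv] := pickP (fun D => (D \in bip_comps P) && (v \in D)).
    rewrite (norm_balance_in HC Hv) (sum_bip_comps_at (F := fun D =>
      if v \in D then `|pq_diff P D| / #|D|%:R else 0) HC Hv) ?Hv // => D _ HvD.
    by rewrite (negbTE HvD).
  have unc : uncovered v by move=> D HD; apply/negP => HvD; have := Hv D; rewrite HD HvD.
  by rewrite balance_out // normr0 big1 // => D HD; rewrite (negbTE (unc D HD)).
rewrite (eq_bigr _ (fun v _ => rowE v)) exchange_big /=; apply: eq_bigr => D HD.
rewrite -big_mkcond /= sumr_const -[_ *+ #|D|]mulr_natr mulfVK //.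
by rewrite lt0r_neq0 // (bip_comp_card_gt0 HD).
Qed.

(* c w_C^2 / |C| <= c gamma <= alpha^-1: the entries of N inside a block keep the
   sign pattern of z_C^T z_C. *)
Lemma lim_coef_weight_le C : C \in bip_comps P ->
  c * (pq_diff P C ^+ 2 / #|C|%:R) <= alpha^-1.
Proof.
move=> HC; have Hg := alpha_l_gamma_gt0 P alpha_gt0 l_gt0.
apply: (@le_trans _ _ (c * gammaP P)).
  rewrite ler_wpM2l ?lim_coef_ge0 // /gammaP (bigD1 C) //= lerDl.
  by apply: sumr_ge0 => D _; rewrite divr_ge0 ?sqr_ge0 ?ler0n.
rewrite /c /lim_coef mulrAC ler_pdivrMr ?mulr_gt0 // mulrA mulVf ?lt0r_neq0 // mul1r.
by rewrite lerDr; apply: ltW.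
Qed.

Lemma row_sum_inside C u : C \in bip_comps P -> u \in C ->
  \sum_(v in C) `|N u v| = alpha^-1 - c * (pq_diff P C ^+ 2 / #|C|%:R).
Proof.
move=> HC Hu; have C0 : (#|C|%:R : R) != 0 by rewrite lt0r_neq0 // (bip_comp_card_gt0 HC).
have a0 : alpha != 0 by rewrite lt0r_neq0.
under eq_bigr => v Hv.
  rewrite (limit_mx_in _ HC Hu) (balance_in HC Hv) normrM norm_signed_ind // mul1r.
  have -> : alpha^-1 * signed_ind P C 0 v / #|C|%:R - c * (pq_diff P C / #|C|%:R) *
      (pq_diff P C / #|C|%:R * signed_ind P C 0 v) = signed_ind P C 0 v *
      ((alpha^-1 - c * (pq_diff P C ^+ 2 / #|C|%:R)) / #|C|%:R) by field; rewrite C0.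
  rewrite normrM norm_signed_ind // mul1r ger0_norm; last first.
    by rewrite divr_ge0 ?subr_ge0 ?lim_coef_weight_le ?ler0n.
  over.
by rewrite sumr_const -[_ *+ #|C|]mulr_natr divfK.
Qed.

Lemma row_sum_outside C u : C \in bip_comps P -> u \in C ->
  \sum_(v | v \notin C) `|N u v| = c * (`|pq_diff P C| * (dP P - `|pq_diff P C|) / #|C|%:R).
Proof.
move=> HC Hu; have C0 : (#|C|%:R : R) != 0 by rewrite lt0r_neq0 // (bip_comp_card_gt0 HC).
have c0 : 0 <= c by apply: lim_coef_ge0.
have -> : \sum_(v | v \notin C) `|N u v| =
          c * `|pq_diff P C| / #|C|%:R * \sum_(v | v \notin C) `|balance P v|.
  rewrite mulr_sumr; apply: eq_bigr => v Hv.
  rewrite (limit_mx_in _ HC Hu) (signed_ind_out P Hv) mulr0 mul0r sub0r normrM normrN.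
  rewrite norm_signed_ind // mul1r normrM [`|c * _|]normrM (ger0_norm c0) normrM normfV.
  by rewrite (ger0_norm (ler0n _ _)); field.
have outside : \sum_(v | v \notin C) `|balance P v| = dP P - `|pq_diff P C|.
  have inside : \sum_(v in C) `|balance P v| = `|pq_diff P C|.
    under eq_bigr => v Hv do rewrite (norm_balance_in HC Hv).
    by rewrite sumr_const -[_ *+ #|C|]mulr_natr divfK.
  by rewrite -sum_norm_balance [in RHS](bigID (fun v => v \in C)) /= inside; ring.
by rewrite outside; field.
Qed.

Lemma row_abs_sum_in C u : C \in bip_comps P -> u \in C ->
  \sum_v `|N u v| = alpha^-1 + c * maxterm P C.
Proof.
move=> HC Hu; rewrite (bigID (fun v => v \in C)) /= row_sum_inside // row_sum_outside //.
rewrite /maxterm pq_card // /absdiff -/(pq_diff P C).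
have -> : pq_diff P C ^+ 2 = `|pq_diff P C| ^+ 2 by rewrite real_normK ?num_real.
ring.
Qed.

Lemma row_abs_sum_out u : uncovered u -> \sum_v `|N u v| = 0.
Proof. by move=> Hu; rewrite big1 // => v _; rewrite limit_mx_out ?normr0. Qed.

End RowSums.

Lemma bigmax_attained (R : realDomainType) n (f : 'I_n -> R) i0 :
  (forall i, f i <= f i0) -> 0 <= f i0 -> \big[Num.max/0]_(i < n) f i = f i0.
Proof.
move=> fmax f0; apply/eqP; rewrite eq_le le_bigmax andbT.
by apply: bigmax_le => // i _; apply: fmax.
Qed.

Unset Implicit Arguments.

Theorem corollary4p10 (R : realFieldType) (n : nat) (l alpha : R)
    (P : 'M[R]_n) :
  (3 <= n)%N -> 0 < l -> (n - 2)%:R * l <= alpha ->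
  signless_laplacian P ->
  exists N : 'M[R]_n,
    mx_lim_infty (fun t : R => invmx (Smat n alpha l + t *: P)) N /\
    (rcount P = 0%N -> norm_inf N = 0) /\
    ((1 <= rcount P)%N ->
      exists2 C0, C0 \in bip_comps P &
        (forall C, C \in bip_comps P -> maxterm P C <= maxterm P C0) /\
        norm_inf N = alpha^-1 + l / (alpha * (alpha + l * gammaP P)) * maxterm P C0).
Proof.
move=> n_ge3 l_gt0 alpha_ge HP.
have alpha_gt0 : 0 < alpha.
  by apply: lt_le_trans alpha_ge; rewrite mulr_gt0 // ltr0n subn_gt0.
exists (limit_mx P alpha l); split; first exact: resolvent_limit.
split=> [r0 | r_ge1].
  have unc u : uncovered P u by move=> D; rewrite (cards0_eq r0) inE.
  by rewrite /norm_inf; apply: big1_idem => [|u _]; [exact: maxxx | apply: row_abs_sum_out].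
have [C1 HC1] : exists C, C \in bip_comps P by apply/card_gt0P.
have [C0 HC0 C0max] := arg_maxP (maxterm P) HC1.
exists C0 => //; split=> [C HC|]; first exact: C0max.
have [u0 Hu0] := bip_comp_nonempty HC0.
have row0 := row_abs_sum_in HP alpha_gt0 l_gt0 HC0 Hu0.
have row_le u : \sum_v `|limit_mx P alpha l u v| <= \sum_v `|limit_mx P alpha l u0 v|.
  rewrite row0; have [C /andP [HC Hu] | Hu] :=
    pickP (fun D => (D \in bip_comps P) && (u \in D)).
    rewrite (row_abs_sum_in HP alpha_gt0 l_gt0 HC Hu) lerD2l.
    by apply: ler_wpM2l; [exact: lim_coef_ge0 | exact: C0max].
  rewrite row_abs_sum_out -?row0 ?sumr_ge0 // => D HD.
  by apply/negP => HuD; have := Hu D; rewrite HD HuD.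
have row0_ge0 : 0 <= \sum_v `|limit_mx P alpha l u0 v| by apply: sumr_ge0.
by rewrite /norm_inf (bigmax_attained row_le row0_ge0) row0.
Qed.
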